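(* Let $n\ge 2$ and $1\le k<n$. Consider the following class of mechanisms (called Ideal-TFRMs). For every bid vector $b=(b_1,\dots,b_n)\in\mathbb{R}_{\ge 0}^n$ of the $n$ included transactions, ordered so that $b_1\ge b_2\ge\dots\ge b_n$, users $1,\dots,k$ are confirmed and each confirmed user pays the VCG payment $b_{k+1}$ minus a rebate. Rebates are given by a single (anonymous) function $g:\mathbb{R}_{\ge 0}^{n-1}\to\mathbb{R}$ via $$r_i=g(b_1,\dots,b_{i-1},b_{i+1},\dots,b_n),\qquad i=1,\dots,n,$$ and the mechanism is required to satisfy, for every ordered bid vector: $r_i=0$ for all $i\in\{k+1,\dots,n\}$ (included but unconfirmed users receive no rebate) and $r_i\le b_{k+1}$ for all $i\in\{1,\dots,k\}$. Then no such mechanism guarantees a strictly positive worst-case redistribution index; that is, $$e_{\mathsf{wc}}=\inf_{b:\,k\,b_{k+1}\neq 0}\frac{\sum_{i=1}^n r_i}{k\,b_{k+1}}$$ is not strictly positive.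
   Context: The setting models a blockchain block containing $n$ included transactions, each belonging to a distinct user who submits a bid; the $k$ highest bids are confirmed. The total VCG payment collected is $k\,b_{k+1}$. The requirement that $r_i$ depend only on the other users' bids (in sorted order) through a common function $g$ is the characterization of deterministic, anonymous, user-incentive-compatible rebate functions. The worst-case redistribution index is the infimum, over bid vectors with nonzero total VCG payment, of the fraction of that payment returned as rebates. *)

From HB Require Import structures.
From mathcomp Require Import all_boot all_order all_algebra.
From mathcomp Require Import boolp classical_sets reals constructive_ereal ereal.
Set Implicit Arguments. Unset Strict Implicit. Unset Printing Implicit Defensive.
Import Order.TTheory GRing.Theory Num.Theory.
Local Open Scope classical_set_scope.
Local Open Scope ring_scope.

Section Defs.
Variable R : realType.

(* Bid vectors are sequences, 0-indexed: b = [:: b_1; ...; b_n] (paper's b_j is nth 0 b (j-1)). *)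
Definition drop_nth (b : seq R) (i : nat) : seq R := take i b ++ drop i.+1 b.

Definition ordered_bids (n : nat) (b : seq R) : Prop :=
  size b = n /\ sorted (fun x y => y <= x) b /\ all (fun x => 0 <= x) b.

Definition rebate (g : seq R -> R) (b : seq R) (i : nat) : R := g (drop_nth b i).

(* VCG price b_{k+1} (paper, 1-based) = nth 0 b k (0-based). *)
Definition vcg_price (k : nat) (b : seq R) : R := nth 0 b k.

Definition ideal_TFRM (n k : nat) (g : seq R -> R) : Prop :=
  forall b, ordered_bids n b ->
    (forall i, (k <= i < n)%N -> rebate g b i = 0) /\
    (forall i, (i < k)%N -> rebate g b i <= vcg_price k b).

Definition e_wc (n k : nat) (g : seq R -> R) : \bar R :=
  ereal_inf [set ((\sum_(i < n) rebate g b i) / (k%:R * vcg_price k b))%:E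
            | b in [set b | ordered_bids n b /\ k%:R * vcg_price k b != 0]].

End Defs.

From Pilot Require Import Defs.
From HB Require Import structures.
From mathcomp Require Import all_boot all_order all_algebra.
From mathcomp Require Import boolp classical_sets reals constructive_ereal ereal.
From mathcomp Require Import zify.

Set Implicit Arguments.
Unset Strict Implicit.
Unset Printing Implicit Defensive.
Import Order.TTheory GRing.Theory Num.Theory.
Local Open Scope ring_scope.

(* Proof idea: when all n bids are equal, deleting any one of them leaves the
   same vector, so by anonymity every user receives the same rebate as the
   unconfirmed user k+1, namely 0.  The total rebate is then 0 while the VCG
   payment k b_{k+1} is positive, so the worst-case index is at most 0. *)

Section ConstantBids.
Variable R : realType.

Lemma drop_nth_nseq (n i : nat) (x : R) : (i < n)%N ->
  Defs.drop_nth (nseq n x) i = nseq n.-1 x.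
Proof.
move=> lt_in; rewrite /Defs.drop_nth take_nseq ?drop_nseq -?nseqD; [congr nseq; lia | lia].
Qed.

Lemma ordered_bids_nseq (n : nat) (x : R) : 0 <= x -> ordered_bids n (nseq n x).
Proof.
move=> x_ge0; split; first by rewrite size_nseq.
split; last by apply/allP => y /nseqP [-> _].
by case: n => // n /=; elim: n => //= n ->; rewrite lexx.
Qed.

Lemma rebate_nseq (g : seq R -> R) (x : R) (n i j : nat) : (i < n)%N -> (j < n)%N ->
  rebate g (nseq n x) i = rebate g (nseq n x) j.
Proof. by move=> lt_in lt_jn; rewrite /rebate !drop_nth_nseq. Qed.

End ConstantBids.

Lemma e_wc_le (R : realType) (n k : nat) (g : seq R -> R) (b : seq R) :
  ordered_bids n b -> k%:R * vcg_price k b != 0 ->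
  (e_wc n k g <= ((\sum_(i < n) rebate g b i) / (k%:R * vcg_price k b))%:E)%E.
Proof. by move=> ob pay_neq0; apply: ereal_inf_lbound; exists b. Qed.

Theorem theorem2 (R : realType) (n k : nat) (hn : (2 <= n)%N) (hk : (1 <= k)%N)
    (hkn : (k < n)%N) (g : seq R -> R) :
  ideal_TFRM n k g -> ~ (0 < e_wc n k g)%E.
Proof.
move=> ideal_g; set b := nseq n (1 : R).
have ob : ordered_bids n b by apply: ordered_bids_nseq.
have price_b : vcg_price k b = 1 by rewrite /vcg_price nth_nseq hkn.
have [unconfirmed_0 _] := ideal_g b ob.
have rebates_0 : \sum_(i < n) rebate g b i = 0.
  apply: big1 => i _; rewrite (rebate_nseq g 1 (ltn_ord i) hkn).
  by apply: unconfirmed_0; rewrite leqnn hkn.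
have pay_neq0 : k%:R * vcg_price k b != 0 by rewrite price_b mulr1 pnatr_eq0 -lt0n.
have := e_wc_le g ob pay_neq0; rewrite rebates_0 mul0r => e_le0 e_gt0.
by have := lt_le_trans e_gt0 e_le0; rewrite ltxx.
Qed.
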